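(* Let $f:\mathbb{R}^n\to\mathbb{R}$ be bounded, $\lambda>0$, $h>0$, and let $x_k\in h\mathbb{Z}^n$ be a grid point. Then $$M^h_\lambda(f)(x_k)=g_m(x_k)\quad\text{for every integer } m\ge\Big\lfloor\tfrac1h\sqrt{\mathrm{osc}(f)/\lambda}\Big\rfloor+1,$$ where $g_m(x_k)=\inf\{f(x_k+rh)+\lambda h^2|r|^2:\ r\in\mathbb{Z}^n,\ |r|_\infty\le m\}$.
   Context: $M^h_\lambda(f)(x_k)=\inf\{f(x_k+rh)+\lambda h^2|r|^2:\ r\in\mathbb{Z}^n\}$ is the discrete lower Moreau envelope; $\mathrm{osc}(f)=\sup f-\inf f$; $\lfloor x\rfloor$ is the integer part of $x$; $|r|$ is the Euclidean norm and $|r|_\infty=\max_i|r_i|$. *)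

From HB Require Import structures.
From mathcomp Require Import all_boot all_order all_algebra.
From mathcomp Require Import all_classical all_reals.
Set Implicit Arguments. Unset Strict Implicit. Unset Printing Implicit Defensive.
Import Order.TTheory GRing.Theory Num.Theory.
Local Open Scope ring_scope.
Local Open Scope classical_set_scope.

Section Defs.
Variables (R : realType) (n : nat).

Definition sqnormZ (r : 'rV[int]_n) : R := \sum_(i < n) ((r ord0 i)%:~R) ^+ 2.

Definition vecZ (r : 'rV[int]_n) : 'rV[R]_n := map_mx (fun z : int => z%:~R) r.

Definition grid_pt (h : R) (k : 'rV[int]_n) : 'rV[R]_n := h *: vecZ k.

Definition moreau_disc (h lam : R) (f : 'rV[R]_n -> R) (x : 'rV[R]_n) : R :=
  inf [set f (x + h *: vecZ r) + lam * h ^+ 2 * sqnormZ r | r in [set: 'rV[int]_n]].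

Definition g_trunc (m : nat) (h lam : R) (f : 'rV[R]_n -> R) (x : 'rV[R]_n) : R :=
  inf [set f (x + h *: vecZ r) + lam * h ^+ 2 * sqnormZ r
      | r in [set r : 'rV[int]_n | forall i, `|r ord0 i| <= m%:Z]].

Definition bounded_fun (f : 'rV[R]_n -> R) : Prop := exists M : R, forall x, `|f x| <= M.

Definition osc (f : 'rV[R]_n -> R) : R := sup (range f) - inf (range f).

End Defs.

(** A grid displacement [r] with [|r|_oo > m] has some coordinate [|r_i| > m], so its
    penalty [lam h^2 |r|^2] exceeds [lam h^2 m^2], which the choice of [m] makes at least
    [osc f].  Then [f (x + r h) + lam h^2 |r|^2 >= inf f + osc f = sup f >= f x], the
    value at [r = 0]: such displacements never beat the centre of the box, so the
    infimum over [Z^n] equals the infimum over the box [|r|_oo <= m]. *)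
From HB Require Import structures.
From mathcomp Require Import all_boot all_order all_algebra.
From mathcomp Require Import all_classical all_reals.
From mathcomp Require Import lra.
Import Order.TTheory GRing.Theory Num.Theory.
Local Open Scope ring_scope.
Local Open Scope classical_set_scope.

Lemma floor_sqrt_bound {R : archiRcfType} {c lam h : R} {m : int} :
  0 < lam -> 0 < h -> Num.floor (h^-1 * Num.sqrt (c / lam)) + 1 <= m ->
  c < lam * h ^+ 2 * m%:~R ^+ 2.
Proof.
move=> lam_gt0 h_gt0; rewrite lezD1 floor_lt_int ltr_pdivrMl //.
move=> sqrt_lt; have hm_gt0 := le_lt_trans (sqrtr_ge0 _) sqrt_lt.
move: sqrt_lt; rewrite -[h * _]gtr0_norm // -sqrtr_sqr ltr_sqrt ?exprn_gt0 //.
by rewrite ltr_pdivrMr // mulrC exprMn mulrA.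
Qed.

Lemma inf_image_dominated {R : realType} {T : Type} (F : T -> R) (A B : set T) :
  A `<=` B -> A !=set0 -> has_lbound (F @` B) ->
  (forall b, B b -> exists2 a, A a & F a <= F b) ->
  inf (F @` B) = inf (F @` A).
Proof.
move=> AB [a0 Aa0] [l lbB] dom.
have lbA : has_lbound (F @` A).
  by exists l => _ [a Aa <-]; apply: lbB; exists a; first exact: AB.
apply/eqP; rewrite eq_le; apply/andP; split.
  apply: lb_le_inf; first by exists (F a0), a0.
  by move=> _ [a Aa <-]; apply: ge_inf; [exists l | exists a; first exact: AB].
apply: lb_le_inf; first by exists (F a0), a0; first exact: AB.
move=> _ [b Bb <-]; have [a Aa Fab] := dom b Bb.
by apply: le_trans Fab; apply: ge_inf => //; exists a.
Qed.

Section IntegerVectors.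
Context (R : realType) {n : nat}.

Lemma vecZ0 : vecZ R (0 : 'rV[int]_n) = 0.
Proof. by apply/matrixP => i j; rewrite !mxE. Qed.

Lemma sqnormZ0 : sqnormZ R (0 : 'rV[int]_n) = 0.
Proof. by rewrite /sqnormZ big1 // => i _; rewrite mxE expr0n. Qed.

Lemma sqnormZ_ge0 (r : 'rV[int]_n) : 0 <= sqnormZ R r.
Proof. by apply: sumr_ge0 => i _; apply: sqr_ge0. Qed.

Lemma sqr_coord_le_sqnormZ (r : 'rV[int]_n) i : (r ord0 i)%:~R ^+ 2 <= sqnormZ R r.
Proof.
rewrite /sqnormZ (bigD1 i) //= lerDl.
by apply: sumr_ge0 => j _; apply: sqr_ge0.
Qed.

Lemma sqnormZ_outside_box (m : nat) (r : 'rV[int]_n) :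
  ~ (forall i, `|r ord0 i| <= m%:Z) -> m%:R ^+ 2 <= sqnormZ R r.
Proof.
move=> /existsNP[i /negP]; rewrite -ltNge => m_lt_ri.
apply: le_trans (sqr_coord_le_sqnormZ r i).
rewrite -(ltr_int R) intr_norm in m_lt_ri.
rewrite -[leRHS]real_normK ?num_real //.
by rewrite ler_pXn2r ?nnegrE // ltW.
Qed.

End IntegerVectors.

Section Oscillation.
Context {R : realType} {n : nat} {f : 'rV[R]_n -> R}.
Hypothesis f_bounded : bounded_fun f.

Lemma inf_range_le x : inf (range f) <= f x.
Proof.
have [M fM] := f_bounded; apply: ge_inf; last by exists x.
by exists (- M) => _ [y _ <-]; have := fM y; rewrite ler_norml => /andP[].
Qed.

Lemma le_sup_range x : f x <= sup (range f).
Proof.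
have [M fM] := f_bounded; apply: sup_upper_bound; last by exists x.
split; first by exists (f x), x.
by exists M => _ [y _ <-]; have := fM y; rewrite ler_norml => /andP[].
Qed.

Lemma sub_le_osc x y : f x - f y <= osc f.
Proof. by rewrite /osc lerB // ?le_sup_range ?inf_range_le. Qed.

End Oscillation.

Section DiscreteMoreau.
Context (R : realType) (n : nat) (f : 'rV[R]_n -> R) (h lam : R) (x : 'rV[R]_n).
Hypotheses (f_bounded : bounded_fun f) (lam_gt0 : 0 < lam).

Let cost (r : 'rV[int]_n) := f (x + h *: vecZ R r) + lam * h ^+ 2 * sqnormZ R r.

Let cost0 : cost 0 = f x.
Proof. by rewrite /cost vecZ0 scaler0 addr0 sqnormZ0 mulr0 addr0. Qed.

Let weight_ge0 : 0 <= lam * h ^+ 2.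
Proof. by rewrite mulr_ge0 ?sqr_ge0 // ltW. Qed.

Let penalty_ge0 (r : 'rV[int]_n) : 0 <= lam * h ^+ 2 * sqnormZ R r.
Proof. by rewrite mulr_ge0 ?sqnormZ_ge0. Qed.

Let cost_ge_inf (r : 'rV[int]_n) : inf (range f) <= cost r.
Proof. by rewrite (le_trans (inf_range_le f_bounded (x + h *: vecZ R r))) // lerDl penalty_ge0. Qed.

Let cost_outside_box (m : nat) (r : 'rV[int]_n) : osc f <= lam * h ^+ 2 * m%:R ^+ 2 ->
  ~ (forall i, `|r ord0 i| <= m%:Z) -> cost 0 <= cost r.
Proof.
move=> osc_le r_out; rewrite cost0 /cost.
have := sub_le_osc f_bounded x (x + h *: vecZ R r).
have : lam * h ^+ 2 * m%:R ^+ 2 <= lam * h ^+ 2 * sqnormZ R r.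
  by rewrite ler_wpM2l // sqnormZ_outside_box.
lra.
Qed.

Lemma moreau_disc_eq_g_trunc (m : nat) : osc f <= lam * h ^+ 2 * m%:R ^+ 2 ->
  moreau_disc h lam f x = g_trunc m h lam f x.
Proof.
move=> osc_le; apply: (inf_image_dominated cost) => //.
- by exists 0 => i; rewrite mxE normr0.
- by exists (inf (range f)) => _ [r _ <-]; apply: cost_ge_inf.
move=> r _; have [r_in | r_out] := pselect (forall i, `|r ord0 i| <= m%:Z).
  by exists r.
by exists 0; [move=> i; rewrite mxE normr0 | apply: cost_outside_box r_out].
Qed.

End DiscreteMoreau.

Theorem proposition4p8 (R : realType) (n : nat) (f : 'rV[R]_n -> R)
  (lam h : R) (k : 'rV[int]_n) :
  bounded_fun f -> 0 < lam -> 0 < h ->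
  forall m : nat,
    (Num.floor (h^-1 * Num.sqrt (osc f / lam)) + 1 <= m%:Z)%R ->
    moreau_disc h lam f (grid_pt h k) = g_trunc m h lam f (grid_pt h k).
Proof.
move=> f_bounded lam_gt0 h_gt0 m m_large.
apply: moreau_disc_eq_g_trunc => //.
by have := floor_sqrt_bound lam_gt0 h_gt0 m_large; rewrite pmulrn => /ltW.
Qed.
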